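(* Let $V:S^2\to\mathbb R$ be smooth and let $\nabla V$ denote the Euclidean gradient of some smooth extension of $V$ to a neighbourhood of $S^2$ in $\mathbb R^3$. A smooth curve $\vec n:[0,T]\to S^2$ is a quantum Riemannian cubic with obstacle avoidance (for the potential $V$) if it satisfies, for all $t\in[0,T]$, $$P(\vec n)\Big(\ddddot{\vec n}+2\|\dot{\vec n}\|^2\ddot{\vec n}+4(\dot{\vec n}\cdot\ddot{\vec n})\,\dot{\vec n}+\|\ddot{\vec n}\|^2\vec n+\nabla V(\vec n)\Big)=0 .$$
   Context: $S^2\subset\mathbb R^3$ is the unit sphere with the round metric (induced by the Euclidean inner product ''$\cdot$''); $D_t$ denotes the Levi--Civita covariant derivative along a curve. For $\vec n\in S^2$, $P(\vec n)=I-\vec n\vec n^\top$ is the orthogonal projector of $\mathbb R^3$ onto $T_{\vec n}S^2$. For a smooth $V:S^2\to\mathbb R$, consider the action $$J[\vec n]=\int_0^T\Big[\tfrac12\|D_t\dot{\vec n}(t)\|^2+V(\vec n(t))\Big]dt .$$ A curve $\vec n:[0,T]\to S^2$ is called a quantum Riemannian cubic with obstacle avoidance if it is a critical point of $J$ under (smooth) variations that fix both $(\vec n(0),\dot{\vec n}(0))$ and $(\vec n(T),\dot{\vec n}(T))$. *)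

From Stdlib Require Import Reals List.
From Coquelicot Require Import Coquelicot.
Open Scope R_scope.

Definition v3 : Type := (R * R * R)%type.
Definition mk3 (a b c : R) : v3 := (a, b, c).
Definition c1 (u : v3) : R := fst (fst u).
Definition c2 (u : v3) : R := snd (fst u).
Definition c3 (u : v3) : R := snd u.
Definition v3zero : v3 := mk3 0 0 0.
Definition dot (u v : v3) : R := c1 u * c1 v + c2 u * c2 v + c3 u * c3 v.
Definition norm2 (u : v3) : R := dot u u.
Definition vadd (u v : v3) : v3 := mk3 (c1 u + c1 v) (c2 u + c2 v) (c3 u + c3 v).
Definition vscal (a : R) (u : v3) : v3 := mk3 (a * c1 u) (a * c2 u) (a * c3 u).

Definition onS2 (u : v3) : Prop := dot u u = 1.

Definition proj (n u : v3) : v3 := vadd u (vscal (- dot n u) n).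

Definition dn (k : nat) (c : R -> v3) (t : R) : v3 :=
  mk3 (Derive_n (fun t => c1 (c t)) k t)
      (Derive_n (fun t => c2 (c t)) k t)
      (Derive_n (fun t => c3 (c t)) k t).

Definition smooth1 (f : R -> R) : Prop :=
  forall (k : nat) (x : R), ex_derive (Derive_n f k) x.

Definition smooth_curve (c : R -> v3) : Prop :=
  smooth1 (fun t => c1 (c t)) /\ smooth1 (fun t => c2 (c t)) /\
  smooth1 (fun t => c3 (c t)).

(* Iterated partial derivatives of a function of two real variables (s,t):
   true = d/ds, false = d/dt. *)
Fixpoint pd2 (l : list bool) (f : R -> R -> R) : R -> R -> R :=
  match l with
  | nil => f
  | b :: l' => fun s t =>
      if b then Derive (fun s' => pd2 l' f s' t) s
      else Derive (fun t' => pd2 l' f s t') t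
  end.

Definition smooth2 (f : R -> R -> R) : Prop :=
  forall (l : list bool) (s t : R),
    ex_derive (fun s' => pd2 l f s' t) s /\
    ex_derive (fun t' => pd2 l f s t') t /\
    continuous (fun p : R * R => pd2 l f (fst p) (snd p)) (s, t).

Definition ev (i : nat) : v3 :=
  match i with 0 => mk3 1 0 0 | 1 => mk3 0 1 0 | _ => mk3 0 0 1 end.

Fixpoint pd3 (l : list nat) (f : v3 -> R) : v3 -> R :=
  match l with
  | nil => f
  | i :: l' => fun x => Derive (fun h => pd3 l' f (vadd x (vscal h (ev i)))) 0
  end.

Definition smooth3 (f : v3 -> R) : Prop :=
  forall (l : list nat) (i : nat) (x : v3),
    ex_derive (fun h => pd3 l f (vadd x (vscal h (ev i)))) 0 /\
    continuous (pd3 l f) x.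

Definition grad (f : v3 -> R) (x : v3) : v3 :=
  mk3 (pd3 (0%nat :: nil) f x) (pd3 (1%nat :: nil) f x) (pd3 (2%nat :: nil) f x).

(* Action J[n] = int_0^T (1/2 |D_t n'|^2 + V(n)) dt, where for a curve on S^2
   the Levi-Civita covariant derivative of the velocity is D_t n' = P(n) n''. *)
Definition action (T : R) (V : v3 -> R) (c : R -> v3) : R :=
  RInt (fun t => / 2 * norm2 (proj (c t) (dn 2 c t)) + V (c t)) 0 T.

Definition admissible_variation (T : R) (c : R -> v3) (N : R -> R -> v3) : Prop :=
  smooth2 (fun s t => c1 (N s t)) /\ smooth2 (fun s t => c2 (N s t)) /\
  smooth2 (fun s t => c3 (N s t)) /\
  (forall t, 0 <= t <= T -> N 0 t = c t) /\
  (forall s t, 0 <= t <= T -> onS2 (N s t)) /\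
  (forall s, N s 0 = c 0 /\ N s T = c T /\
             dn 1 (N s) 0 = dn 1 c 0 /\ dn 1 (N s) T = dn 1 c T).

Definition qrc_obstacle (T : R) (V : v3 -> R) (c : R -> v3) : Prop :=
  forall N, admissible_variation T c N ->
    is_derive (fun s => action T V (N s)) 0 0.

Definition EL_expr (V : v3 -> R) (c : R -> v3) (t : R) : v3 :=
  vadd (dn 4 c t)
   (vadd (vscal (2 * norm2 (dn 1 c t)) (dn 2 c t))
    (vadd (vscal (4 * dot (dn 1 c t) (dn 2 c t)) (dn 1 c t))
     (vadd (vscal (norm2 (dn 2 c t)) (c t)) (grad V (c t))))).

(* Along an admissible variation N with N(0, .) = n, differentiate the action under the
   integral sign, use |P(n) u|^2 = |u|^2 - (n . u)^2 on the sphere, and integrate by parts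
   twice in t.  The boundary flux vanishes because N and d_t N do not depend on s at t = 0
   and t = T, and the constraint |N| = 1, differentiated in s and t, turns the integrand
   into P(n) EL . d_s N.  So P(n) EL = 0 makes every first variation vanish.  Conversely,
   move n(t) along the great circle in the tangent direction e(t) = t^2 (T - t)^2 P(n) EL(t),
   rationally parametrised by s: this variation is admissible and its first variation is
   the integral of 2 t^2 (T - t)^2 |P(n) EL|^2, which vanishes only if P(n) EL = 0 on
   (0, T), hence on [0, T] by continuity. *)

From Pilot Require Import Defs.
From Stdlib Require Import Reals Lra Lia List FunctionalExtensionality.
From Coquelicot Require Import Coquelicot.
(* Coquelicot also defines [c1]; re-import Defs so that its names win. *)
Import Defs.
Open Scope R_scope.

Lemma v3_eta (u : v3) : u = mk3 (c1 u) (c2 u) (c3 u).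
Proof. destruct u as [[a b] c]; reflexivity. Qed.

Definition coord (i : nat) (u : v3) : R :=
  match i with O => c1 u | 1%nat => c2 u | _ => c3 u end.

Lemma norm2_nonneg u : 0 <= norm2 u.
Proof.
  unfold norm2, dot. pose proof (Rle_0_sqr (c1 u)). pose proof (Rle_0_sqr (c2 u)).
  pose proof (Rle_0_sqr (c3 u)). unfold Rsqr in *. lra.
Qed.

Lemma norm2_proj n u : onS2 n -> norm2 (proj n u) = norm2 u - dot n u * dot n u.
Proof.
  unfold onS2. intros Hn.
  transitivity (norm2 u - 2 * dot n u * dot n u + dot n u * dot n u * dot n n).
  - unfold norm2, proj, dot, vadd, vscal, c1, c2, c3, mk3; simpl. ring.
  - rewrite Hn. ring.
Qed.

Lemma dot_proj_onS2 n u : onS2 n -> dot n (proj n u) = 0.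
Proof.
  unfold onS2. intros Hn.
  transitivity (dot n u * (1 - dot n n)); [|rewrite Hn; ring].
  unfold proj, dot, vadd, vscal, c1, c2, c3, mk3; cbn [fst snd]. ring.
Qed.

Lemma vscal_0 u : vscal 0 u = v3zero.
Proof. unfold vscal, v3zero. f_equal; ring. Qed.

Lemma dot_vscal_vscal_self u a b : dot u (vscal a (vscal b u)) = a * b * norm2 u.
Proof. unfold norm2, dot, vscal, c1, c2, c3, mk3; cbn [fst snd]. ring. Qed.

Lemma dot_v3zero_l u : dot v3zero u = 0.
Proof. unfold dot, v3zero, c1, c2, c3, mk3; cbn [fst snd]. ring. Qed.

Lemma norm2_eq_0 u : norm2 u = 0 -> u = v3zero.
Proof.
  destruct u as [[u1 u2] u3]. unfold norm2, dot, v3zero, c1, c2, c3, mk3; cbn [fst snd]. intros H.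
  assert (u1 = 0) by nra. assert (u2 = 0) by nra. assert (u3 = 0) by nra. subst. reflexivity.
Qed.

Lemma v3_eq_zero u : coord 0 u = 0 -> coord 1 u = 0 -> coord 2 u = 0 -> u = v3zero.
Proof.
  destruct u as [[u1 u2] u3]. unfold coord, c1, c2, c3; cbn [fst snd]. intros -> -> ->. reflexivity.
Qed.

(** * Functions of two variables *)

Ltac funext2 s t := apply functional_extensionality; intros s; apply functional_extensionality; intros t.

Definition partial (b : bool) (f : R -> R -> R) : R -> R -> R := pd2 (b :: nil) f.
Arguments partial : simpl never.
Notation ds := (partial true).
Notation dt := (partial false).

Definition ex_partial (b : bool) (f : R -> R -> R) (s t : R) : Prop :=
  if b then ex_derive (fun s' => f s' t) s else ex_derive (fun t' => f s t') t.

Definition diff2 (f : R -> R -> R) : Prop :=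
  forall s t, (forall b, ex_partial b f s t) /\ continuity_2d_pt f s t.

Fixpoint diff2n (n : nat) (f : R -> R -> R) : Prop :=
  match n with
  | O => diff2 f
  | S n => diff2 f /\ forall b, diff2n n (partial b f)
  end.

Lemma pd2_rcons l b f : pd2 (l ++ b :: nil) f = pd2 l (partial b f).
Proof.
  induction l as [|b' l IH]; [reflexivity|].
  cbn [app pd2]. rewrite IH. reflexivity.
Qed.

Lemma diff2n_pd2 n f : diff2n n f <-> forall l, (length l <= n)%nat -> diff2 (pd2 l f).
Proof.
  revert f; induction n as [|n IH]; intros f; split.
  - intros Hf [|b l] Hl; [exact Hf | simpl in Hl; lia].
  - intros H. exact (H nil (le_n 0)).
  - intros [Hf Hb] l. destruct l as [|b l _] using rev_ind; intros Hl; [exact Hf|].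
    rewrite pd2_rcons. apply (proj1 (IH _) (Hb b)).
    rewrite length_app in Hl; simpl in Hl; lia.
  - intros H. split; [exact (H nil (Nat.le_0_l _))|].
    intros b. apply IH. intros l Hl. rewrite <- pd2_rcons. apply H.
    rewrite length_app; simpl; lia.
Qed.

Lemma smooth2_diff2n f : smooth2 f <-> forall n, diff2n n f.
Proof.
  assert (E : smooth2 f <-> forall l, diff2 (pd2 l f)).
  { split; intros H l s t.
    - destruct (H l s t) as [H1 [H2 H3]].
      split; [intros []; assumption | apply continuity_2d_pt_filterlim, H3].
    - destruct (H l s t) as [H1 H2].
      split; [exact (H1 true) | split; [exact (H1 false) | apply continuity_2d_pt_filterlim, H2]]. }
  rewrite E. split.
  - intros H n. apply diff2n_pd2. intros l _. apply H.
  - intros H l. exact (proj1 (diff2n_pd2 _ f) (H (length l)) l (le_n _)).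
Qed.

Lemma diff2n_pred n f : diff2n (S n) f -> diff2n n f.
Proof. intros H. apply diff2n_pd2. intros l Hl. apply (proj1 (diff2n_pd2 (S n) f) H); lia. Qed.

Lemma smooth2_diff2 f : smooth2 f -> diff2 f.
Proof. intros H. exact (proj1 (smooth2_diff2n f) H O). Qed.

Lemma smooth2_partial b f : smooth2 f -> smooth2 (partial b f).
Proof.
  rewrite !smooth2_diff2n. intros H n. exact (proj2 (H (S n)) b).
Qed.

Lemma partial_comm f : smooth2 f -> ds (dt f) = dt (ds f).
Proof.
  intros Hf. funext2 s t. apply (Schwarz f s t).
  - apply locally_2d_forall. intros u v.
    destruct (smooth2_diff2 _ Hf u v) as [G0 _].
    destruct (smooth2_diff2 _ (smooth2_partial false _ Hf) u v) as [G1 _].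
    destruct (smooth2_diff2 _ (smooth2_partial true _ Hf) u v) as [G2 _].
    exact (conj (G0 true) (conj (G0 false) (conj (G1 true) (G2 false)))).
  - exact (proj2 (smooth2_diff2 _ (smooth2_partial true _ (smooth2_partial false _ Hf)) s t)).
  - exact (proj2 (smooth2_diff2 _ (smooth2_partial false _ (smooth2_partial true _ Hf)) s t)).
Qed.

Definition fadd (f g : R -> R -> R) : R -> R -> R := fun s t => f s t + g s t.
Definition fmul (f g : R -> R -> R) : R -> R -> R := fun s t => f s t * g s t.
Definition fopp (f : R -> R -> R) : R -> R -> R := fun s t => - f s t.
Definition finv (f : R -> R -> R) : R -> R -> R := fun s t => / f s t.
Definition fconst (a : R) : R -> R -> R := fun _ _ => a.
Definition fvar_s : R -> R -> R := fun s _ => s.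
Definition fvar_t : R -> R -> R := fun _ t => t.
Definition flift (g : R -> R) : R -> R -> R := fun _ t => g t.
Definition fdot (a1 a2 a3 b1 b2 b3 : R -> R -> R) : R -> R -> R :=
  fadd (fadd (fmul a1 b1) (fmul a2 b2)) (fmul a3 b3).

Ltac unfold_fun2 := unfold fadd, fmul, fopp, finv, fconst, fvar_s, fvar_t, flift.
Ltac unfold_partial := unfold partial; cbn [pd2]; unfold_fun2.

Lemma diff2_ex_partial b f s t : diff2 f -> ex_partial b f s t.
Proof. intros H. exact (proj1 (H s t) b). Qed.

Lemma partial_fadd b f g : diff2 f -> diff2 g ->
  partial b (fadd f g) = fadd (partial b f) (partial b g).
Proof.
  intros Hf Hg. funext2 s t.
  pose proof (diff2_ex_partial b f s t Hf). pose proof (diff2_ex_partial b g s t Hg).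
  destruct b; apply Derive_plus; assumption.
Qed.

Lemma partial_fmul b f g : diff2 f -> diff2 g ->
  partial b (fmul f g) = fadd (fmul (partial b f) g) (fmul f (partial b g)).
Proof.
  intros Hf Hg. funext2 s t.
  pose proof (diff2_ex_partial b f s t Hf). pose proof (diff2_ex_partial b g s t Hg).
  destruct b; apply Derive_mult; assumption.
Qed.

Lemma partial_fopp b f : partial b (fopp f) = fopp (partial b f).
Proof. funext2 s t. destruct b; unfold_partial; apply Derive_opp. Qed.

Lemma partial_finv b f : diff2 f -> (forall s t, f s t <> 0) ->
  partial b (finv f) = fopp (fmul (partial b f) (fmul (finv f) (finv f))).
Proof.
  intros Hf Hn. funext2 s t. unfold fopp, fmul, finv.
  pose proof (diff2_ex_partial b f s t Hf).
  destruct b; unfold_partial; rewrite Derive_inv by auto;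
    unfold Rdiv; simpl; rewrite Rmult_1_r, Rinv_mult, Ropp_mult_distr_l; reflexivity.
Qed.

Lemma partial_fconst b a : partial b (fconst a) = fconst 0.
Proof. funext2 s t. destruct b; unfold_partial; apply Derive_const. Qed.

Lemma partial_fvar_s b : partial b fvar_s = fconst (if b then 1 else 0).
Proof. funext2 s t. destruct b; unfold_partial; [apply Derive_id | apply Derive_const]. Qed.

Lemma partial_fvar_t b : partial b fvar_t = fconst (if b then 0 else 1).
Proof. funext2 s t. destruct b; unfold_partial; [apply Derive_const | apply Derive_id]. Qed.

Lemma partial_flift b g : partial b (flift g) = if b then fconst 0 else flift (Derive g).
Proof. destruct b; funext2 s t; unfold_partial; [apply Derive_const | reflexivity]. Qed.

Lemma diff2_cont f s t : diff2 f -> continuity_2d_pt f s t.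
Proof. intros H. exact (proj2 (H s t)). Qed.

Lemma diff2_fadd f g : diff2 f -> diff2 g -> diff2 (fadd f g).
Proof.
  intros Hf Hg s t. split.
  - intros b. pose proof (diff2_ex_partial b f s t Hf). pose proof (diff2_ex_partial b g s t Hg).
    destruct b; unfold ex_partial in *; unfold_fun2; exact (ex_derive_plus _ _ _ H H0).
  - apply continuity_2d_pt_plus; apply diff2_cont; assumption.
Qed.

Lemma diff2_fmul f g : diff2 f -> diff2 g -> diff2 (fmul f g).
Proof.
  intros Hf Hg s t. split.
  - intros b. pose proof (diff2_ex_partial b f s t Hf). pose proof (diff2_ex_partial b g s t Hg).
    destruct b; unfold ex_partial in *; unfold_fun2; exact (ex_derive_mult _ _ _ H H0).
  - apply continuity_2d_pt_mult; apply diff2_cont; assumption.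
Qed.

Lemma diff2_fopp f : diff2 f -> diff2 (fopp f).
Proof.
  intros Hf s t. split.
  - intros b. pose proof (diff2_ex_partial b f s t Hf).
    destruct b; unfold ex_partial in *; unfold_fun2; exact (ex_derive_opp _ _ H).
  - apply continuity_2d_pt_opp, diff2_cont, Hf.
Qed.

Lemma diff2_finv f : diff2 f -> (forall s t, f s t <> 0) -> diff2 (finv f).
Proof.
  intros Hf Hn s t. split.
  - intros b. pose proof (diff2_ex_partial b f s t Hf).
    destruct b; unfold ex_partial in *; unfold_fun2; exact (ex_derive_inv _ _ H (Hn _ _)).
  - apply continuity_2d_pt_inv; [apply diff2_cont, Hf | apply Hn].
Qed.

Lemma diff2_fconst a : diff2 (fconst a).
Proof.
  intros s t. unfold ex_partial; unfold_fun2.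
  split; [intros []; apply ex_derive_const | apply continuity_2d_pt_const].
Qed.

Lemma diff2_fvar_s : diff2 fvar_s.
Proof.
  intros s t. unfold ex_partial; unfold_fun2.
  split; [intros []; [apply ex_derive_id | apply ex_derive_const]
                     | apply continuity_2d_pt_id1].
Qed.

Lemma diff2_fvar_t : diff2 fvar_t.
Proof.
  intros s t. unfold ex_partial; unfold_fun2.
  split; [intros []; [apply ex_derive_const | apply ex_derive_id]
                     | apply continuity_2d_pt_id2].
Qed.

Lemma diff2_flift (g : R -> R) : (forall t, ex_derive g t) -> diff2 (flift g).
Proof.
  intros Hg s t. unfold ex_partial; unfold_fun2.
  split; [intros []; [apply ex_derive_const | apply Hg]|].
  apply (continuity_1d_2d_pt_comp g (fun _ v => v)); [|apply continuity_2d_pt_id2].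
  apply continuity_pt_filterlim, (ex_derive_continuous (K := R_AbsRing) (V := R_NormedModule)), Hg.
Qed.

Lemma diff2n_fadd n : forall f g, diff2n n f -> diff2n n g -> diff2n n (fadd f g).
Proof.
  induction n as [|n IH]; intros f g Hf Hg; [apply diff2_fadd; assumption|].
  destruct Hf as [Hf Hfb], Hg as [Hg Hgb].
  split; [apply diff2_fadd; assumption|].
  intros b. rewrite partial_fadd by assumption. apply IH; auto.
Qed.

Lemma diff2n_fopp n : forall f, diff2n n f -> diff2n n (fopp f).
Proof.
  induction n as [|n IH]; intros f Hf; [apply diff2_fopp; assumption|].
  destruct Hf as [Hf Hfb]. split; [apply diff2_fopp; assumption|].
  intros b. rewrite partial_fopp. apply IH; auto.
Qed.

Lemma diff2n_fconst n a : diff2n n (fconst a).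
Proof.
  revert a; induction n as [|n IH]; intros a; [apply diff2_fconst|].
  split; [apply diff2_fconst|]. intros b. rewrite partial_fconst. apply IH.
Qed.

Lemma diff2n_fmul n : forall f g, diff2n n f -> diff2n n g -> diff2n n (fmul f g).
Proof.
  induction n as [|n IH]; intros f g Hf Hg; [apply diff2_fmul; assumption|].
  pose proof (diff2n_pred _ _ Hf) as Hf'. pose proof (diff2n_pred _ _ Hg) as Hg'.
  destruct Hf as [Hf Hfb], Hg as [Hg Hgb].
  split; [apply diff2_fmul; assumption|].
  intros b. rewrite partial_fmul by assumption. apply diff2n_fadd; apply IH; auto.
Qed.

Lemma diff2n_finv n : forall f, (forall s t, f s t <> 0) -> diff2n n f -> diff2n n (finv f).
Proof.
  induction n as [|n IH]; intros f Hn Hf; [apply diff2_finv; assumption|].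
  pose proof (diff2n_pred _ _ Hf) as Hf'. destruct Hf as [Hf Hfb].
  split; [apply diff2_finv; assumption|].
  intros b. rewrite partial_finv by assumption.
  apply diff2n_fopp, diff2n_fmul, diff2n_fmul; auto.
Qed.

Lemma diff2n_fvar_s n : diff2n n fvar_s.
Proof.
  destruct n; [apply diff2_fvar_s|]. split; [apply diff2_fvar_s|].
  intros b. rewrite partial_fvar_s. apply diff2n_fconst.
Qed.

Lemma diff2n_fvar_t n : diff2n n fvar_t.
Proof.
  destruct n; [apply diff2_fvar_t|]. split; [apply diff2_fvar_t|].
  intros b. rewrite partial_fvar_t. apply diff2n_fconst.
Qed.

Lemma smooth1_Derive_n g k : smooth1 g -> smooth1 (Derive_n g k).
Proof.
  intros Hg j x. apply (ex_derive_ext (Derive_n g (j + k))); [|apply Hg].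
  intros y. symmetry. apply Derive_n_comp.
Qed.

Lemma diff2n_flift n : forall g, smooth1 g -> diff2n n (flift g).
Proof.
  induction n as [|n IH]; intros g Hg; [apply diff2_flift, (Hg O)|].
  split; [apply diff2_flift, (Hg O)|].
  intros b. rewrite partial_flift. destruct b; [apply diff2n_fconst|].
  apply IH, (smooth1_Derive_n g 1), Hg.
Qed.

Lemma smooth2_fadd f g : smooth2 f -> smooth2 g -> smooth2 (fadd f g).
Proof. rewrite !smooth2_diff2n. intros Hf Hg n. apply diff2n_fadd; auto. Qed.

Lemma smooth2_fmul f g : smooth2 f -> smooth2 g -> smooth2 (fmul f g).
Proof. rewrite !smooth2_diff2n. intros Hf Hg n. apply diff2n_fmul; auto. Qed.

Lemma smooth2_fopp f : smooth2 f -> smooth2 (fopp f).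
Proof. rewrite !smooth2_diff2n. intros Hf n. apply diff2n_fopp; auto. Qed.

Lemma smooth2_finv f : (forall s t, f s t <> 0) -> smooth2 f -> smooth2 (finv f).
Proof. rewrite !smooth2_diff2n. intros Hn Hf n. apply diff2n_finv; auto. Qed.

Lemma smooth2_fconst a : smooth2 (fconst a).
Proof. apply smooth2_diff2n. intros n. apply diff2n_fconst. Qed.

Lemma smooth2_fvar_s : smooth2 fvar_s.
Proof. apply smooth2_diff2n. intros n. apply diff2n_fvar_s. Qed.

Lemma smooth2_fvar_t : smooth2 fvar_t.
Proof. apply smooth2_diff2n. intros n. apply diff2n_fvar_t. Qed.

Lemma smooth2_flift g : smooth1 g -> smooth2 (flift g).
Proof. intros Hg. apply smooth2_diff2n. intros n. apply diff2n_flift, Hg. Qed.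

Lemma partial_s_constant (f : R -> R -> R) t0 : (forall s, f s t0 = f 0 t0) -> ds f 0 t0 = 0.
Proof.
  intros H. unfold_partial. rewrite (Derive_ext (fun s => f s t0) (fun _ => f 0 t0)) by apply H.
  apply Derive_const.
Qed.

Lemma smooth2_ex_derive_t F s t : smooth2 F -> ex_derive (F s) t.
Proof. intros HF. exact (diff2_ex_partial false _ s t (smooth2_diff2 _ HF)). Qed.

Lemma smooth2_continuous_t F s t : smooth2 F -> continuous (F s) t.
Proof.
  intros HF. apply (ex_derive_continuous (K := R_AbsRing) (V := R_NormedModule)).
  apply smooth2_ex_derive_t, HF.
Qed.

Lemma is_derive_RInt_smooth2 (F : R -> R -> R) (a b s0 : R) : smooth2 F ->
  is_derive (fun s => RInt (F s) a b) s0 (RInt (ds F s0) a b).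
Proof.
  intros HF. pose proof (smooth2_diff2 _ HF) as D.
  pose proof (smooth2_diff2 _ (smooth2_partial true _ HF)) as Ds.
  apply (is_derive_RInt_param F a b s0).
  - apply filter_forall. intros s t _. exact (diff2_ex_partial true _ s t D).
  - intros t _. apply diff2_cont, Ds.
  - apply filter_forall. intros s. apply (ex_RInt_continuous (V := R_CompleteNormedModule)).
    intros t _. apply (ex_derive_continuous (K := R_AbsRing) (V := R_NormedModule)).
    exact (diff2_ex_partial false _ s t D).
Qed.

(** * Differentiating through a smooth potential *)

Definition partial3 (i : nat) (V : v3 -> R) : v3 -> R := pd3 (i :: nil) V.

Lemma pd3_rcons l i V : pd3 (l ++ i :: nil) V = pd3 l (partial3 i V).
Proof. induction l as [|j l IH]; [reflexivity|]. cbn [app pd3]. rewrite IH. reflexivity. Qed.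

Lemma smooth3_partial3 i V : smooth3 V -> smooth3 (partial3 i V).
Proof. intros HV l j x. rewrite <- pd3_rcons. apply HV. Qed.

Lemma is_derive_axis V i x h0 : smooth3 V ->
  is_derive (fun h => V (vadd x (vscal h (ev i)))) h0
    (partial3 i V (vadd x (vscal h0 (ev i)))).
Proof.
  intros HV. set (y := vadd x (vscal h0 (ev i))).
  assert (Hy : forall h, vadd x (vscal h (ev i)) = vadd y (vscal (h - h0) (ev i))).
  { intros h. unfold y, vadd, vscal, c1, c2, c3, mk3; simpl. f_equal; [f_equal|]; ring. }
  destruct (HV nil i y) as [[l Hl] _].
  replace (partial3 i V y) with l by (symmetry; apply is_derive_unique, Hl).
  apply (is_derive_ext (fun h => V (vadd y (vscal (h - h0) (ev i))))); [intros; rewrite Hy; reflexivity|].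
  rewrite <- (Rminus_diag h0) in Hl.
  replace l with (scal 1 l) by (unfold scal; simpl; unfold mult; simpl; ring).
  apply (is_derive_comp (fun h => V (vadd y (vscal h (ev i))))); [exact Hl|].
  auto_derive; [exact I | ring].
Qed.

Lemma is_derive_along_axis V i x (y : R -> v3) h0 :
  (forall h, vadd x (vscal h (ev i)) = y h) -> smooth3 V ->
  is_derive (fun h => V (y h)) h0 (partial3 i V (y h0)).
Proof.
  intros E HV. rewrite <- E.
  apply (is_derive_ext (fun h => V (vadd x (vscal h (ev i))))); [intros; rewrite E; reflexivity|].
  apply is_derive_axis, HV.
Qed.

Lemma mean_value_bound (g dg : R -> R) (a b P eps : R) :
  (forall u, is_derive g u (dg u)) ->
  (forall u, Rabs (u - b) <= Rabs (a - b) -> Rabs (dg u - P) < eps) ->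
  Rabs (g a - g b - P * (a - b)) <= eps * Rabs (a - b).
Proof.
  intros Hg Hdg.
  destruct (MVT_gen g b a dg) as [xi [Hxi E]].
  - intros u _. apply Hg.
  - intros u _. apply continuity_pt_filterlim.
    apply (ex_derive_continuous (K := R_AbsRing) (V := R_NormedModule)). eexists; apply Hg.
  - rewrite E. replace (dg xi * (a - b) - P * (a - b)) with ((dg xi - P) * (a - b)) by ring.
    rewrite Rabs_mult. apply Rmult_le_compat_r; [apply Rabs_pos|].
    apply Rlt_le, Hdg. revert Hxi; unfold Rmin, Rmax; destruct (Rle_dec b a); intros;
      unfold Rabs; repeat destruct Rcase_abs; lra.
Qed.

Lemma continuous_v3_box (f : v3 -> R) b1 b2 b3 eps : continuous f (mk3 b1 b2 b3) -> 0 < eps ->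
  exists del, 0 < del /\ forall u1 u2 u3,
   Rabs (u1 - b1) < del -> Rabs (u2 - b2) < del -> Rabs (u3 - b3) < del ->
   Rabs (f (mk3 u1 u2 u3) - f (mk3 b1 b2 b3)) < eps.
Proof.
  intros Hc He.
  destruct (Hc (ball (f (mk3 b1 b2 b3)) (mkposreal eps He)) (locally_ball _ _)) as [d Hd].
  exists d. split; [apply cond_pos|]. intros u1 u2 u3 H1 H2 H3.
  apply (Hd (mk3 u1 u2 u3)). split; [split|]; assumption.
Qed.

Lemma smooth3_increment V b1 b2 b3 eps : smooth3 V -> 0 < eps ->
  exists del, 0 < del /\ forall a1 a2 a3,
   Rabs (a1 - b1) < del -> Rabs (a2 - b2) < del -> Rabs (a3 - b3) < del ->
   Rabs (V (mk3 a1 a2 a3) - V (mk3 b1 b2 b3)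
         - (partial3 0 V (mk3 b1 b2 b3) * (a1 - b1) + partial3 1 V (mk3 b1 b2 b3) * (a2 - b2)
            + partial3 2 V (mk3 b1 b2 b3) * (a3 - b3)))
   <= eps * (Rabs (a1 - b1) + Rabs (a2 - b2) + Rabs (a3 - b3)).
Proof.
  (* Telescope along the coordinate axes; the mean value theorem on each segment puts the
     partial derivative at an intermediate point, within [eps] of its value at b. *)
  intros HV He. set (b := mk3 b1 b2 b3).
  destruct (continuous_v3_box (partial3 0 V) b1 b2 b3 eps (proj2 (HV _ O b)) He) as [d0 [Hd0 C0]].
  destruct (continuous_v3_box (partial3 1 V) b1 b2 b3 eps (proj2 (HV _ O b)) He) as [d1 [Hd1 C1]].
  destruct (continuous_v3_box (partial3 2 V) b1 b2 b3 eps (proj2 (HV _ O b)) He) as [d2 [Hd2 C2]].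
  exists (Rmin d0 (Rmin d1 d2)). split; [repeat apply Rmin_pos; assumption|].
  intros a1 a2 a3 H1 H2 H3.
  pose proof (Rmin_l d0 (Rmin d1 d2)). pose proof (Rmin_r d0 (Rmin d1 d2)).
  pose proof (Rmin_l d1 d2). pose proof (Rmin_r d1 d2).
  assert (Z : forall u, Rabs (u - u) = 0) by (intros; rewrite Rminus_diag; apply Rabs_R0).
  assert (I1 : Rabs (V (mk3 a1 a2 a3) - V (mk3 b1 a2 a3) - partial3 0 V b * (a1 - b1))
               <= eps * Rabs (a1 - b1)).
  { apply (mean_value_bound (fun u => V (mk3 u a2 a3)) (fun u => partial3 0 V (mk3 u a2 a3))).
    - intros u. apply (is_derive_along_axis V 0 (mk3 0 a2 a3) (fun h => mk3 h a2 a3)); [|exact HV].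
      intros h. unfold vadd, vscal, c1, c2, c3, mk3; simpl. f_equal; [f_equal|]; ring.
    - intros u Hu. apply C0; lra. }
  assert (I2 : Rabs (V (mk3 b1 a2 a3) - V (mk3 b1 b2 a3) - partial3 1 V b * (a2 - b2))
               <= eps * Rabs (a2 - b2)).
  { apply (mean_value_bound (fun u => V (mk3 b1 u a3)) (fun u => partial3 1 V (mk3 b1 u a3))).
    - intros u. apply (is_derive_along_axis V 1 (mk3 b1 0 a3) (fun h => mk3 b1 h a3)); [|exact HV].
      intros h. unfold vadd, vscal, c1, c2, c3, mk3; simpl. f_equal; [f_equal|]; ring.
    - intros u Hu. apply C1; rewrite ?Z; lra. }
  assert (I3 : Rabs (V (mk3 b1 b2 a3) - V b - partial3 2 V b * (a3 - b3))
               <= eps * Rabs (a3 - b3)).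
  { apply (mean_value_bound (fun u => V (mk3 b1 b2 u)) (fun u => partial3 2 V (mk3 b1 b2 u))).
    - intros u. apply (is_derive_along_axis V 2 (mk3 b1 b2 0) (fun h => mk3 b1 b2 h)); [|exact HV].
      intros h. unfold vadd, vscal, c1, c2, c3, mk3; simpl. f_equal; [f_equal|]; ring.
    - intros u Hu. apply C2; rewrite ?Z; lra. }
  match goal with |- Rabs ?e <= _ => replace e with
    ((V (mk3 a1 a2 a3) - V (mk3 b1 a2 a3) - partial3 0 V b * (a1 - b1))
     + (V (mk3 b1 a2 a3) - V (mk3 b1 b2 a3) - partial3 1 V b * (a2 - b2))
     + (V (mk3 b1 b2 a3) - V b - partial3 2 V b * (a3 - b3))) by ring end.
  eapply Rle_trans; [apply Rabs_triang|].
  eapply Rle_trans; [apply Rplus_le_compat_r, Rabs_triang|]. lra.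
Qed.

Lemma chain_rule_estimate (P0 P1 P2 d1 d2 d3 r1 r2 r3 q e : R) : e <= 1 ->
  Rabs (r1 - d1) < e -> Rabs (r2 - d2) < e -> Rabs (r3 - d3) < e ->
  Rabs q <= e * (Rabs r1 + Rabs r2 + Rabs r3) ->
  Rabs (q + (P0 * (r1 - d1) + P1 * (r2 - d2) + P2 * (r3 - d3)))
  <= e * (3 + Rabs d1 + Rabs d2 + Rabs d3 + Rabs P0 + Rabs P1 + Rabs P2).
Proof.
  intros He H1 H2 H3 Hq.
  assert (Hr : forall r d, Rabs (r - d) < e -> Rabs r <= Rabs d + 1).
  { intros r d Hrd. replace r with (d + (r - d)) by ring.
    eapply Rle_trans; [apply Rabs_triang | lra]. }
  assert (HP : forall P r d, Rabs (r - d) < e -> Rabs (P * (r - d)) <= Rabs P * e).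
  { intros P r d Hrd. rewrite Rabs_mult. apply Rmult_le_compat_l; [apply Rabs_pos | lra]. }
  pose proof (Hr _ _ H1). pose proof (Hr _ _ H2). pose proof (Hr _ _ H3).
  pose proof (HP P0 _ _ H1). pose proof (HP P1 _ _ H2). pose proof (HP P2 _ _ H3).
  assert (e * (Rabs r1 + Rabs r2 + Rabs r3) <= e * (3 + Rabs d1 + Rabs d2 + Rabs d3)).
  { apply Rmult_le_compat_l; [|lra]. pose proof (Rabs_pos (r1 - d1)). lra. }
  eapply Rle_trans; [apply Rabs_triang|].
  eapply Rle_trans; [apply Rplus_le_compat_l, Rabs_triang|].
  eapply Rle_trans; [apply Rplus_le_compat_l, Rplus_le_compat_r, Rabs_triang|].
  lra.
Qed.

Lemma is_derive_increment_small (x : R -> R) s0 d del : is_derive x s0 d -> 0 < del ->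
  exists dl : posreal, forall h, Rabs h < dl -> Rabs (x (s0 + h) - x s0) < del.
Proof.
  intros Hx Hdel.
  assert (Hc : continuous x s0).
  { apply (ex_derive_continuous (K := R_AbsRing) (V := R_NormedModule)). exists d; exact Hx. }
  destruct (Hc _ (locally_ball (x s0) (mkposreal del Hdel))) as [dl Hdl].
  exists dl. intros h Hh. apply (Hdl (s0 + h)).
  change (Rabs (s0 + h - s0) < dl). replace (s0 + h - s0) with h by ring. exact Hh.
Qed.

Lemma is_derive_smooth3_comp V x1 x2 x3 s0 d1 d2 d3 : smooth3 V ->
  is_derive x1 s0 d1 -> is_derive x2 s0 d2 -> is_derive x3 s0 d3 ->
  is_derive (fun s => V (mk3 (x1 s) (x2 s) (x3 s))) s0
    (partial3 0 V (mk3 (x1 s0) (x2 s0) (x3 s0)) * d1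
     + partial3 1 V (mk3 (x1 s0) (x2 s0) (x3 s0)) * d2
     + partial3 2 V (mk3 (x1 s0) (x2 s0) (x3 s0)) * d3).
Proof.
  intros HV H1 H2 H3. set (b := mk3 (x1 s0) (x2 s0) (x3 s0)).
  set (P0 := partial3 0 V b). set (P1 := partial3 1 V b). set (P2 := partial3 2 V b).
  set (K := 3 + Rabs d1 + Rabs d2 + Rabs d3 + Rabs P0 + Rabs P1 + Rabs P2).
  assert (HK : 0 < K).
  { unfold K. pose proof (Rabs_pos d1). pose proof (Rabs_pos d2). pose proof (Rabs_pos d3).
    pose proof (Rabs_pos P0). pose proof (Rabs_pos P1). pose proof (Rabs_pos P2). lra. }
  apply is_derive_Reals. intros eps Heps.
  set (e := Rmin 1 (eps / (2 * K))).
  assert (He0 : 0 < e) by (apply Rmin_pos; [lra | apply Rdiv_lt_0_compat; lra]).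
  assert (HeK : e * K < eps).
  { assert (Hm : e <= eps / (2 * K)) by apply Rmin_r.
    apply (Rmult_le_compat_r K) in Hm; [|lra].
    replace (eps / (2 * K) * K) with (eps / 2) in Hm by (field; lra). lra. }
  destruct (smooth3_increment V (x1 s0) (x2 s0) (x3 s0) e HV He0) as [del [Hdel Inc]].
  destruct (is_derive_increment_small x1 s0 d1 del H1 Hdel) as [c1 C1].
  destruct (is_derive_increment_small x2 s0 d2 del H2 Hdel) as [c2 C2].
  destruct (is_derive_increment_small x3 s0 d3 del H3 Hdel) as [c3 C3].
  rewrite is_derive_Reals in H1, H2, H3.
  destruct (H1 e He0) as [e1 E1], (H2 e He0) as [e2 E2], (H3 e He0) as [e3 E3].
  assert (Hpos : 0 < Rmin (Rmin e1 (Rmin e2 e3)) (Rmin c1 (Rmin c2 c3)))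
    by (repeat apply Rmin_pos; apply cond_pos).
  exists (mkposreal _ Hpos). intros h Hh0 Hh. simpl in Hh.
  apply Rmin_Rgt_l in Hh as [He Hc]. apply Rmin_Rgt_l in He as [He1 He]. apply Rmin_Rgt_l in He as [He2 He3].
  apply Rmin_Rgt_l in Hc as [Hc1 Hc]. apply Rmin_Rgt_l in Hc as [Hc2 Hc3].
  specialize (Inc _ _ _ (C1 h Hc1) (C2 h Hc2) (C3 h Hc3)).
  specialize (E1 h Hh0 He1). specialize (E2 h Hh0 He2). specialize (E3 h Hh0 He3).
  change (mk3 (x1 s0) (x2 s0) (x3 s0)) with b in Inc |- *.
  set (D1 := x1 (s0 + h) - x1 s0) in *. set (D2 := x2 (s0 + h) - x2 s0) in *.
  set (D3 := x3 (s0 + h) - x3 s0) in *.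
  set (Rem := V (mk3 (x1 (s0 + h)) (x2 (s0 + h)) (x3 (s0 + h))) - V b
              - (P0 * D1 + P1 * D2 + P2 * D3)) in Inc.
  replace ((V (mk3 (x1 (s0 + h)) (x2 (s0 + h)) (x3 (s0 + h))) - V b) / h
           - (P0 * d1 + P1 * d2 + P2 * d3))
    with (Rem / h + (P0 * (D1 / h - d1) + P1 * (D2 / h - d2) + P2 * (D3 / h - d3)))
    by (unfold Rem; field; exact Hh0).
  eapply Rle_lt_trans; [|exact HeK]. apply chain_rule_estimate; try assumption; [apply Rmin_l|].
  unfold Rdiv. rewrite !Rabs_mult, Rabs_inv.
  replace (e * (Rabs D1 * / Rabs h + Rabs D2 * / Rabs h + Rabs D3 * / Rabs h))
    with (e * (Rabs D1 + Rabs D2 + Rabs D3) * / Rabs h) by ring.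
  apply Rmult_le_compat_r; [apply Rlt_le, Rinv_0_lt_compat, Rabs_pos_lt, Hh0 | exact Inc].
Qed.

Definition fcomp3 (V : v3 -> R) (f1 f2 f3 : R -> R -> R) : R -> R -> R :=
  fun s t => V (mk3 (f1 s t) (f2 s t) (f3 s t)).

Lemma diff2_fcomp3 V f1 f2 f3 : smooth3 V -> diff2 f1 -> diff2 f2 -> diff2 f3 ->
  diff2 (fcomp3 V f1 f2 f3).
Proof.
  intros HV H1 H2 H3 s t. split.
  - intros b. pose proof (diff2_ex_partial b _ s t H1). pose proof (diff2_ex_partial b _ s t H2).
    pose proof (diff2_ex_partial b _ s t H3).
    destruct b; unfold ex_partial, fcomp3 in *; eexists;
      apply is_derive_smooth3_comp; try apply Derive_correct; assumption.
  - intros eps.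
    destruct (continuous_v3_box V (f1 s t) (f2 s t) (f3 s t) eps (proj2 (HV nil O _))
                (cond_pos eps)) as [del [Hdel Hc]].
    pose proof (diff2_cont _ s t H1 (mkposreal del Hdel)) as C1.
    pose proof (diff2_cont _ s t H2 (mkposreal del Hdel)) as C2.
    pose proof (diff2_cont _ s t H3 (mkposreal del Hdel)) as C3.
    eapply locally_2d_impl; [|exact (locally_2d_and _ _ _ _ C1 (locally_2d_and _ _ _ _ C2 C3))].
    apply locally_2d_forall. intros u v [D1 [D2 D3]]. apply Hc; assumption.
Qed.

Lemma partial_fcomp3 b V f1 f2 f3 : smooth3 V -> diff2 f1 -> diff2 f2 -> diff2 f3 ->
  partial b (fcomp3 V f1 f2 f3) =
  fadd (fadd (fmul (fcomp3 (partial3 0 V) f1 f2 f3) (partial b f1))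
             (fmul (fcomp3 (partial3 1 V) f1 f2 f3) (partial b f2)))
       (fmul (fcomp3 (partial3 2 V) f1 f2 f3) (partial b f3)).
Proof.
  intros HV H1 H2 H3. funext2 s t.
  pose proof (diff2_ex_partial b _ s t H1). pose proof (diff2_ex_partial b _ s t H2).
  pose proof (diff2_ex_partial b _ s t H3).
  destruct b; unfold ex_partial in *; unfold_partial; unfold fcomp3; apply is_derive_unique.
  - apply (is_derive_smooth3_comp V (fun s' => f1 s' t) (fun s' => f2 s' t) (fun s' => f3 s' t));
      [assumption | apply Derive_correct; assumption ..].
  - apply (is_derive_smooth3_comp V (f1 s) (f2 s) (f3 s));
      [assumption | apply Derive_correct; assumption ..].
Qed.

Lemma diff2n_fcomp3 n : forall V f1 f2 f3, smooth3 V ->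
  diff2n n f1 -> diff2n n f2 -> diff2n n f3 -> diff2n n (fcomp3 V f1 f2 f3).
Proof.
  induction n as [|n IH]; intros V f1 f2 f3 HV H1 H2 H3; [apply diff2_fcomp3; assumption|].
  pose proof (diff2n_pred _ _ H1). pose proof (diff2n_pred _ _ H2).
  pose proof (diff2n_pred _ _ H3).
  destruct H1 as [H1 H1b], H2 as [H2 H2b], H3 as [H3 H3b].
  split; [apply diff2_fcomp3; assumption|].
  intros b. rewrite partial_fcomp3 by assumption.
  repeat apply diff2n_fadd; apply diff2n_fmul; auto; apply IH; auto; apply smooth3_partial3, HV.
Qed.

Lemma smooth2_fcomp3 V f1 f2 f3 : smooth3 V -> smooth2 f1 -> smooth2 f2 -> smooth2 f3 ->
  smooth2 (fcomp3 V f1 f2 f3).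
Proof. intros HV. rewrite !smooth2_diff2n. intros H1 H2 H3 n. apply diff2n_fcomp3; auto. Qed.

Ltac smooth2_tac := repeat match goal with
  | |- smooth2 (fadd _ _) => apply smooth2_fadd
  | |- smooth2 (fmul _ _) => apply smooth2_fmul
  | |- smooth2 (fopp _) => apply smooth2_fopp
  | |- smooth2 (fdot _ _ _ _ _ _) => unfold fdot
  | |- smooth2 (fconst _) => apply smooth2_fconst
  | |- smooth2 fvar_s => apply smooth2_fvar_s
  | |- smooth2 fvar_t => apply smooth2_fvar_t
  | |- smooth2 (fcomp3 _ _ _ _) => apply smooth2_fcomp3
  | |- smooth2 (partial _ _) => apply smooth2_partial
  | |- smooth3 (partial3 _ _) => apply smooth3_partial3
  | |- _ => assumption
  end.

Lemma RInt_sub_derive_vanishing (f g : R -> R) (a b : R) :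
  (forall x, continuous f x) -> (forall x, ex_derive g x) -> (forall x, continuous (Derive g) x) ->
  g a = 0 -> g b = 0 -> RInt (fun x => f x - Derive g x) a b = RInt f a b.
Proof.
  intros Hf Hg Hdg Ha Hb.
  assert (I : RInt (Derive g) a b = 0).
  { apply (is_RInt_unique (V := R_CompleteNormedModule)).
    replace 0 with (minus (g b) (g a)) by (rewrite Ha, Hb; unfold minus, plus, opp; simpl; ring).
    apply (is_RInt_derive (V := R_CompleteNormedModule)); intros x _; [apply Derive_correct|]; auto. }
  pose proof (RInt_minus (V := R_CompleteNormedModule) f (Derive g) a b) as E.
  unfold minus, plus, opp in E; simpl in E. unfold Rminus.
  rewrite E, I by (apply (ex_RInt_continuous (V := R_CompleteNormedModule)); auto).
  rewrite Ropp_0. apply Rplus_0_r.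
Qed.

Lemma continuous_pos_locally (f : R -> R) x0 : continuous f x0 -> 0 < f x0 ->
  exists eps : posreal, forall y, Rabs (y - x0) < eps -> 0 < f y.
Proof.
  intros Hc Hpos.
  assert (L : locally (f x0) (fun y => 0 < y)).
  { apply (locally_interval _ _ (Finite 0) p_infty); simpl; auto. }
  destruct (Hc _ L) as [eps Heps]. exists eps. intros y Hy. apply Heps, Hy.
Qed.

Lemma RInt_nonneg_zero (f : R -> R) (a b : R) : a < b ->
  (forall x, a <= x <= b -> continuous f x) -> (forall x, a < x < b -> 0 <= f x) ->
  RInt f a b = 0 -> forall x, a < x < b -> f x = 0.
Proof.
  intros Hab Hc Hnn HI x0 Hx0.
  destruct (Rle_lt_or_eq_dec 0 (f x0) (Hnn x0 Hx0)) as [Hpos|]; [exfalso|auto].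
  destruct (continuous_pos_locally f x0 (Hc x0 ltac:(lra)) Hpos) as [eps Heps].
  set (d := Rmin (eps / 2) (Rmin ((x0 - a) / 2) ((b - x0) / 2))).
  assert (Hd : 0 < d /\ d <= eps / 2 /\ d <= (x0 - a) / 2 /\ d <= (b - x0) / 2).
  { pose proof (cond_pos eps). unfold d. repeat split.
    - repeat apply Rmin_pos; lra.
    - apply Rmin_l.
    - eapply Rle_trans; [apply Rmin_r | apply Rmin_l].
    - eapply Rle_trans; [apply Rmin_r | apply Rmin_r]. }
  assert (Ex : forall u v, a <= u <= v -> v <= b -> ex_RInt f u v).
  { intros u v Huv Hv. apply (ex_RInt_continuous (V := R_CompleteNormedModule)).
    intros z Hz. rewrite Rmin_left, Rmax_right in Hz by lra. apply Hc. lra. }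
  assert (Split : RInt f a b = RInt f a (x0 - d) + RInt f (x0 - d) (x0 + d) + RInt f (x0 + d) b).
  { rewrite <- (RInt_Chasles (V := R_CompleteNormedModule) f a (x0 + d) b),
            <- (RInt_Chasles (V := R_CompleteNormedModule) f a (x0 - d) (x0 + d))
      by (apply Ex; lra). reflexivity. }
  assert (0 <= RInt f a (x0 - d)) by (apply RInt_ge_0; [lra | apply Ex; lra | intros; apply Hnn; lra]).
  assert (0 <= RInt f (x0 + d) b) by (apply RInt_ge_0; [lra | apply Ex; lra | intros; apply Hnn; lra]).
  assert (0 < RInt f (x0 - d) (x0 + d)).
  { apply RInt_gt_0; [lra | | intros; apply Hc; lra].
    intros y Hy. apply Heps. unfold Rabs. destruct Rcase_abs; lra. }
  lra.
Qed.

Lemma continuous_vanishing_interior (g : R -> R) a b x0 : a < b -> a <= x0 <= b ->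
  continuous g x0 -> (forall x, a < x < b -> g x = 0) -> g x0 = 0.
Proof.
  intros Hab Hx0 Hc Hz. destruct (Req_dec (g x0) 0) as [|Hne]; [assumption|]. exfalso.
  assert (L : locally (g x0) (fun y => y <> 0)).
  { exists (mkposreal _ (Rabs_pos_lt _ Hne)). intros y Hy E. subst y.
    revert Hy. change (Rabs (0 - g x0) < Rabs (g x0) -> False).
    rewrite Rminus_0_l, Rabs_Ropp. lra. }
  destruct (Hc _ L) as [eps Heps].
  set (lam := Rmin (1 / 2) (eps / (b - a))).
  assert (Hl : 0 < lam /\ lam <= 1 / 2 /\ lam * (b - a) <= eps).
  { pose proof (cond_pos eps). assert (Hle : lam <= eps / (b - a)) by apply Rmin_r.
    repeat split.
    - apply Rmin_pos; [lra | apply Rdiv_lt_0_compat; lra].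
    - apply Rmin_l.
    - apply (Rmult_le_compat_r (b - a)) in Hle; [|lra].
      replace (eps / (b - a) * (b - a)) with (pos eps) in Hle by (field; lra). exact Hle. }
  set (y := x0 + lam * ((a + b) / 2 - x0)).
  apply (Heps y); [|apply Hz; unfold y; split; nra].
  change (Rabs (y - x0) < eps). unfold y.
  replace (x0 + lam * ((a + b) / 2 - x0) - x0) with (lam * ((a + b) / 2 - x0)) by ring.
  rewrite Rabs_mult, (Rabs_pos_eq lam) by lra.
  assert (Rabs ((a + b) / 2 - x0) <= (b - a) / 2) by (unfold Rabs; destruct Rcase_abs; lra).
  assert (lam * Rabs ((a + b) / 2 - x0) <= lam * ((b - a) / 2)) by (apply Rmult_le_compat_l; lra).
  pose proof (cond_pos eps). nra.
Qed.

(** * The first variation of the action *)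

Definition euler_lagrange (n q p p4 g : v3) : v3 :=
  vadd p4 (vadd (vscal (2 * norm2 q) p) (vadd (vscal (4 * dot q p) q) (vadd (vscal (norm2 p) n) g))).

(* The pointwise identity behind the first variation: [n q p p4] are n and its t-derivatives
   of orders 1, 2, 4, [w w1 w2] are d_s n and its t-derivatives of orders 0, 1, 2, and
   [g = grad V (n)].  The left side is d_s L - d_t (flux); the hypotheses are the constraint
   |n| = 1 differentiated once in s, twice in t, and once in s and twice in t. *)
Lemma first_variation_identity (n q p p4 w w1 w2 g : v3) :
  dot n w = 0 -> norm2 q + dot n p = 0 -> dot p w + 2 * dot q w1 + dot n w2 = 0 ->
  dot p w2 - dot n p * (dot p w + dot n w2) + dot g w
  - (dot p w2 - dot p4 w - 4 * dot q p * dot q w - 2 * norm2 q * (dot p w + dot q w1))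
  = dot (proj n (euler_lagrange n q p p4 g)) w.
Proof.
  intros K1 K2 K3. apply Rminus_diag_uniq.
  transitivity (- (norm2 q + dot n p) * (dot p w + dot n w2)
                + norm2 q * (dot p w + 2 * dot q w1 + dot n w2)
                + (dot n (euler_lagrange n q p p4 g) - norm2 p) * dot n w).
  - unfold euler_lagrange, proj, norm2, dot, vadd, vscal, c1, c2, c3, mk3; simpl. ring.
  - rewrite K1, K2, K3. ring.
Qed.

Definition lagrangian (V : v3 -> R) (n1 n2 n3 : R -> R -> R) : R -> R -> R :=
  let p1 := dt (dt n1) in let p2 := dt (dt n2) in let p3 := dt (dt n3) in
  fadd (fmul (fconst (/ 2)) (fadd (fdot p1 p2 p3 p1 p2 p3)
                                  (fopp (fmul (fdot n1 n2 n3 p1 p2 p3) (fdot n1 n2 n3 p1 p2 p3)))))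
       (fcomp3 V n1 n2 n3).

(* The flux of the two integrations by parts in t that turn [ds] of the Lagrangian
   into [P(n) EL . ds n]. *)
Definition boundary_flux (n1 n2 n3 : R -> R -> R) : R -> R -> R :=
  let w1 := ds n1 in let w2 := ds n2 in let w3 := ds n3 in
  let q1 := dt n1 in let q2 := dt n2 in let q3 := dt n3 in
  let p1 := dt q1 in let p2 := dt q2 in let p3 := dt q3 in
  fadd (fadd (fdot p1 p2 p3 (dt w1) (dt w2) (dt w3)) (fopp (fdot (dt p1) (dt p2) (dt p3) w1 w2 w3)))
       (fopp (fmul (fmul (fconst 2) (fdot q1 q2 q3 q1 q2 q3)) (fdot q1 q2 q3 w1 w2 w3))).

Definition sphere_defect (n1 n2 n3 : R -> R -> R) : R -> R -> R :=
  fadd (fdot n1 n2 n3 n1 n2 n3) (fconst (-1)).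

Definition vanishes_on_strip (T : R) (f : R -> R -> R) : Prop :=
  forall s t, 0 < t < T -> f s t = 0.

Lemma vanishes_on_strip_partial b T f : vanishes_on_strip T f -> vanishes_on_strip T (partial b f).
Proof.
  intros Hf s t Ht. destruct b; unfold_partial.
  - rewrite (Derive_ext (fun s' => f s' t) (fun _ => 0)); [apply Derive_const | intros; apply Hf, Ht].
  - rewrite (Derive_ext_loc (fun t' => f s t') (fun _ => 0)); [apply Derive_const|].
    apply (locally_interval _ t (Finite 0) (Finite T)); simpl; try lra.
    intros y H0 HT. apply Hf. lra.
Qed.

Ltac diff2_tac := apply smooth2_diff2; smooth2_tac.
Ltac expand := repeat first
  [ rewrite partial_fadd by diff2_tac | rewrite partial_fmul by diff2_tac
  | rewrite partial_fopp | rewrite partial_fconst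
  | rewrite partial_fcomp3 by first [diff2_tac | smooth2_tac] ].

Definition vec_at (n1 n2 n3 : R -> R -> R) (t : R) : v3 := mk3 (n1 0 t) (n2 0 t) (n3 0 t).

Section FirstVariation.

Variables (T : R) (V : v3 -> R) (n1 n2 n3 : R -> R -> R).
Hypotheses (HV : smooth3 V) (S1 : smooth2 n1) (S2 : smooth2 n2) (S3 : smooth2 n3)
  (Hsphere : vanishes_on_strip T (sphere_defect n1 n2 n3)).

Lemma variation_tangent t : 0 < t < T ->
  dot (vec_at n1 n2 n3 t) (vec_at (ds n1) (ds n2) (ds n3) t) = 0.
Proof.
  intros Ht. pose proof (vanishes_on_strip_partial true _ _ Hsphere 0 t Ht) as K. revert K.
  unfold sphere_defect, fdot. expand. unfold_fun2.
  unfold dot, vec_at, c1, c2, c3, mk3; simpl. intros K. lra.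
Qed.

Lemma sphere_second_derivative t : 0 < t < T ->
  norm2 (vec_at (dt n1) (dt n2) (dt n3) t)
  + dot (vec_at n1 n2 n3 t) (vec_at (dt (dt n1)) (dt (dt n2)) (dt (dt n3)) t) = 0.
Proof.
  intros Ht.
  pose proof (vanishes_on_strip_partial false _ _
    (vanishes_on_strip_partial false _ _ Hsphere) 0 t Ht) as K. revert K.
  unfold sphere_defect, fdot. expand. unfold_fun2.
  unfold norm2, dot, vec_at, c1, c2, c3, mk3; simpl. intros K. lra.
Qed.

Lemma variation_tangent_second_derivative t : 0 < t < T ->
  dot (vec_at (dt (dt n1)) (dt (dt n2)) (dt (dt n3)) t) (vec_at (ds n1) (ds n2) (ds n3) t)
  + 2 * dot (vec_at (dt n1) (dt n2) (dt n3) t) (vec_at (dt (ds n1)) (dt (ds n2)) (dt (ds n3)) t)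
  + dot (vec_at n1 n2 n3 t) (vec_at (dt (dt (ds n1))) (dt (dt (ds n2))) (dt (dt (ds n3))) t) = 0.
Proof.
  intros Ht.
  pose proof (vanishes_on_strip_partial false _ _ (vanishes_on_strip_partial false _ _
    (vanishes_on_strip_partial true _ _ Hsphere)) 0 t Ht) as K. revert K.
  unfold sphere_defect, fdot. expand. unfold_fun2.
  unfold dot, vec_at, c1, c2, c3, mk3; simpl. intros K. lra.
Qed.

Lemma lagrangian_ds_sub_flux t : 0 < t < T ->
  ds (lagrangian V n1 n2 n3) 0 t - dt (boundary_flux n1 n2 n3) 0 t =
  dot (proj (vec_at n1 n2 n3 t)
        (euler_lagrange (vec_at n1 n2 n3 t) (vec_at (dt n1) (dt n2) (dt n3) t)
           (vec_at (dt (dt n1)) (dt (dt n2)) (dt (dt n3)) t)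
           (vec_at (dt (dt (dt (dt n1)))) (dt (dt (dt (dt n2)))) (dt (dt (dt (dt n3)))) t)
           (grad V (vec_at n1 n2 n3 t))))
      (vec_at (ds n1) (ds n2) (ds n3) t).
Proof.
  intros Ht.
  rewrite <- first_variation_identity with (p := vec_at (dt (dt n1)) (dt (dt n2)) (dt (dt n3)) t)
    (w1 := vec_at (dt (ds n1)) (dt (ds n2)) (dt (ds n3)) t)
    (w2 := vec_at (dt (dt (ds n1))) (dt (dt (ds n2))) (dt (dt (ds n3))) t)
    by auto using variation_tangent, sphere_second_derivative, variation_tangent_second_derivative.
  unfold lagrangian, boundary_flux, fdot. cbv zeta. expand.
  rewrite !(partial_comm (dt _)), !partial_comm by smooth2_tac.
  unfold_fun2. unfold fcomp3, grad, partial3, norm2, dot, vec_at, c1, c2, c3, mk3; cbn [fst snd]. field.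
Qed.

End FirstVariation.

Definition component (N : R -> R -> v3) (i : nat) : R -> R -> R := fun s t => coord i (N s t).

Lemma vec_at_component N t :
  vec_at (component N 0) (component N 1) (component N 2) t = N 0 t.
Proof. symmetry. apply v3_eta. Qed.

Lemma action_lagrangian T V N s : 0 < T -> (forall t, 0 <= t <= T -> onS2 (N s t)) ->
  action T V (N s) = RInt (lagrangian V (component N 0) (component N 1) (component N 2) s) 0 T.
Proof.
  intros HT HS. apply RInt_ext. intros t Ht. rewrite Rmin_left, Rmax_right in Ht by lra.
  rewrite norm2_proj by (apply HS; lra).
  rewrite (v3_eta (N s t)). reflexivity.
Qed.

Lemma boundary_flux_endpoint (c : R -> v3) (N : R -> R -> v3) t0 :
  (forall i, smooth2 (component N i)) ->
  (forall s, N s t0 = c t0) -> (forall s, dn 1 (N s) t0 = dn 1 c t0) ->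
  boundary_flux (component N 0) (component N 1) (component N 2) 0 t0 = 0.
Proof.
  intros HN Hpos Hvel.
  assert (W : forall i, ds (component N i) 0 t0 = 0).
  { intros i. apply partial_s_constant. intros s. unfold component. rewrite !Hpos. reflexivity. }
  assert (W' : forall i, (i <= 2)%nat -> dt (ds (component N i)) 0 t0 = 0).
  { intros i Hi. rewrite <- partial_comm by apply HN. apply partial_s_constant. intros s.
    transitivity (coord i (dn 1 (N s) t0)); [destruct i as [|[|[|]]]; try lia; reflexivity|].
    rewrite Hvel, <- (Hvel 0). destruct i as [|[|[|]]]; try lia; reflexivity. }
  unfold boundary_flux, fdot. unfold_fun2.
  rewrite !W, !W' by lia. ring.
Qed.

Lemma dn_ext_interior (c M : R -> v3) (T t : R) k : 0 < t < T ->
  (forall t, 0 <= t <= T -> M t = c t) -> dn k c t = dn k M t.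
Proof.
  intros Ht HM.
  assert (L : locally t (fun y => M y = c y)).
  { apply (locally_interval _ t (Finite 0) (Finite T)); simpl; try lra.
    intros y H0 HT. apply HM; lra. }
  unfold dn. f_equal; apply Derive_n_ext_loc;
    eapply filter_imp; try exact L; intros y Hy; rewrite Hy; reflexivity.
Qed.

Lemma EL_expr_variation T V c (N : R -> R -> v3) t : 0 < t < T ->
  (forall t, 0 <= t <= T -> N 0 t = c t) ->
  let n := component N in
  EL_expr V c t = euler_lagrange (vec_at (n 0%nat) (n 1%nat) (n 2%nat) t)
    (vec_at (dt (n 0%nat)) (dt (n 1%nat)) (dt (n 2%nat)) t)
    (vec_at (dt (dt (n 0%nat))) (dt (dt (n 1%nat))) (dt (dt (n 2%nat))) t)
    (vec_at (dt (dt (dt (dt (n 0%nat))))) (dt (dt (dt (dt (n 1%nat))))) (dt (dt (dt (dt (n 2%nat))))) t)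
    (grad V (vec_at (n 0%nat) (n 1%nat) (n 2%nat) t)).
Proof.
  intros Ht HN n. unfold EL_expr. rewrite !(dn_ext_interior c (N 0) T t _ Ht HN).
  unfold n. rewrite vec_at_component, <- HN by lra. reflexivity.
Qed.

Definition variation_field (N : R -> R -> v3) (t : R) : v3 :=
  vec_at (ds (component N 0)) (ds (component N 1)) (ds (component N 2)) t.

Theorem first_variation T V c N : 0 < T -> smooth3 V -> admissible_variation T c N ->
  is_derive (fun s => action T V (N s)) 0
    (RInt (fun t => dot (proj (c t) (EL_expr V c t)) (variation_field N t)) 0 T).
Proof.
  intros HT HV [H1 [H2 [H3 [H0 [HS Hend]]]]].
  assert (HN : forall i, smooth2 (component N i)) by (intros [|[|[|]]]; assumption).
  set (n := component N) in *.
  pose proof (HN 0%nat) as S0. pose proof (HN 1%nat) as S1. pose proof (HN 2%nat) as S2.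
  assert (Hsphere : vanishes_on_strip T (sphere_defect (n 0%nat) (n 1%nat) (n 2%nat))).
  { intros s t Ht. specialize (HS s t ltac:(lra)). unfold onS2, dot in HS.
    unfold sphere_defect, fdot. unfold_fun2. unfold n, component, coord. lra. }
  set (L := lagrangian V (n 0%nat) (n 1%nat) (n 2%nat)).
  set (G := boundary_flux (n 0%nat) (n 1%nat) (n 2%nat)).
  assert (HL : smooth2 L) by (unfold L, lagrangian; cbv zeta; smooth2_tac).
  assert (HG : smooth2 G) by (unfold G, boundary_flux; cbv zeta; smooth2_tac).
  apply (is_derive_ext (fun s => RInt (L s) 0 T)).
  { intros s. symmetry. apply action_lagrangian; auto. }
  enough (E : RInt (fun t => dot (proj (c t) (EL_expr V c t)) (variation_field N t)) 0 T
               = RInt (ds L 0) 0 T) by (rewrite E; apply is_derive_RInt_smooth2, HL).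
  rewrite <- (RInt_sub_derive_vanishing (ds L 0) (G 0)).
  - apply RInt_ext. intros t Ht. rewrite Rmin_left, Rmax_right in Ht by lra.
    rewrite (EL_expr_variation T V c N t Ht H0), <- (H0 t) by lra.
    rewrite <- (vec_at_component N t).
    symmetry. exact (lagrangian_ds_sub_flux T V _ _ _ HV S0 S1 S2 Hsphere t Ht).
  - intros t. apply smooth2_continuous_t, smooth2_partial, HL.
  - intros t. apply smooth2_ex_derive_t, HG.
  - intros t. apply (smooth2_continuous_t (dt G)), smooth2_partial, HG.
  - apply (boundary_flux_endpoint c N); auto; intros s; apply Hend.
  - apply (boundary_flux_endpoint c N); auto; intros s; apply Hend.
Qed.

Definition smooth_vec (X : R -> R -> v3) : Prop := forall i, smooth2 (component X i).

Lemma smooth2_dot (X Y : R -> R -> v3) : smooth_vec X -> smooth_vec Y ->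
  smooth2 (fun s t => dot (X s t) (Y s t)).
Proof.
  intros HX HY.
  change (smooth2 (fdot (component X 0) (component X 1) (component X 2)
                        (component Y 0) (component Y 1) (component Y 2))).
  pose proof (HX 0%nat). pose proof (HX 1%nat). pose proof (HX 2%nat).
  pose proof (HY 0%nat). pose proof (HY 1%nat). pose proof (HY 2%nat). smooth2_tac.
Qed.

Lemma smooth_vec_vadd (X Y : R -> R -> v3) : smooth_vec X -> smooth_vec Y ->
  smooth_vec (fun s t => vadd (X s t) (Y s t)).
Proof.
  intros HX HY i. replace (component _ i) with (fadd (component X i) (component Y i)).
  - apply smooth2_fadd; auto.
  - funext2 s t. destruct i as [|[|]]; reflexivity.
Qed.

Lemma smooth_vec_vscal (a : R -> R -> R) (X : R -> R -> v3) : smooth2 a -> smooth_vec X ->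
  smooth_vec (fun s t => vscal (a s t) (X s t)).
Proof.
  intros Ha HX i. replace (component _ i) with (fmul a (component X i)).
  - apply smooth2_fmul; auto.
  - funext2 s t. destruct i as [|[|]]; reflexivity.
Qed.

Lemma smooth_vec_proj (X Y : R -> R -> v3) : smooth_vec X -> smooth_vec Y ->
  smooth_vec (fun s t => proj (X s t) (Y s t)).
Proof.
  intros HX HY. apply smooth_vec_vadd; [exact HY|]. apply smooth_vec_vscal; [|exact HX].
  apply (smooth2_fopp (fun s t => dot (X s t) (Y s t))), smooth2_dot; assumption.
Qed.

Lemma smooth_vec_dn (c : R -> v3) k : smooth_curve c -> smooth_vec (fun _ t => dn k c t).
Proof.
  intros [H1 [H2 H3]] [|[|i]];
    [ apply (smooth2_flift (Derive_n (fun t => c1 (c t)) k))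
    | apply (smooth2_flift (Derive_n (fun t => c2 (c t)) k))
    | apply (smooth2_flift (Derive_n (fun t => c3 (c t)) k)) ]; apply smooth1_Derive_n; assumption.
Qed.

Lemma smooth_vec_grad V (X : R -> R -> v3) : smooth3 V -> smooth_vec X ->
  smooth_vec (fun s t => grad V (X s t)).
Proof.
  intros HV HX i.
  pose proof (HX 0%nat). pose proof (HX 1%nat). pose proof (HX 2%nat).
  replace (component _ i)
    with (fcomp3 (partial3 (Nat.min i 2) V) (component X 0) (component X 1) (component X 2)).
  - smooth2_tac.
  - funext2 s t. unfold fcomp3, component. rewrite <- v3_eta. destruct i as [|[|]]; reflexivity.
Qed.

Lemma smooth_vec_curve (c : R -> v3) : smooth_curve c -> smooth_vec (fun _ t => c t).
Proof.
  intros Hc [|[|i]];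
    [exact (smooth_vec_dn c 0 Hc 0%nat) | exact (smooth_vec_dn c 0 Hc 1%nat)
    | exact (smooth_vec_dn c 0 Hc (S (S i)))].
Qed.

Lemma smooth_vec_tangent_EL V c : smooth3 V -> smooth_curve c ->
  smooth_vec (fun _ t => proj (c t) (EL_expr V c t)).
Proof.
  intros HV Hc. pose proof (smooth_vec_dn c 1 Hc). pose proof (smooth_vec_dn c 2 Hc).
  pose proof (smooth_vec_curve c Hc).
  assert (Hdot : forall k l, smooth2 (fun _ t => dot (dn k c t) (dn l c t)))
    by (intros; apply smooth2_dot; apply smooth_vec_dn, Hc).
  apply smooth_vec_proj; [assumption|]. unfold EL_expr.
  apply smooth_vec_vadd; [apply smooth_vec_dn, Hc|].
  apply smooth_vec_vadd.
  { apply smooth_vec_vscal; [|assumption].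
    apply (smooth2_fmul (fconst 2) (fun _ t => norm2 (dn 1 c t))); [apply smooth2_fconst | apply Hdot]. }
  apply smooth_vec_vadd.
  { apply smooth_vec_vscal; [|assumption].
    apply (smooth2_fmul (fconst 4) (fun _ t => dot (dn 1 c t) (dn 2 c t))); [apply smooth2_fconst | apply Hdot]. }
  apply smooth_vec_vadd.
  - apply smooth_vec_vscal; [apply Hdot | assumption].
  - apply smooth_vec_grad; assumption.
Qed.

(** * The test variation *)

(* A rational parametrisation of the great circle through [x] in the direction [e]
   ([x . e = 0]), with initial velocity [2 e]. *)
Definition great_circle (x e : v3) (s : R) : v3 :=
  vscal (/ (1 + s * s * norm2 e)) (vadd (vscal (1 - s * s * norm2 e) x) (vscal (2 * s) e)).

Lemma great_circle_denominator_pos e s : 0 < 1 + s * s * norm2 e.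
Proof. pose proof (norm2_nonneg e). pose proof (Rle_0_sqr s). unfold Rsqr in *. nra. Qed.

Lemma great_circle_onS2 x e s : onS2 x -> dot x e = 0 -> onS2 (great_circle x e s).
Proof.
  unfold onS2. intros Hx Hxe.
  assert (Hd : 1 + s * s * norm2 e <> 0) by (apply Rgt_not_eq, great_circle_denominator_pos).
  transitivity (((1 + s * s * norm2 e) * (1 + s * s * norm2 e)
                 + (1 - s * s * norm2 e) * (1 - s * s * norm2 e) * (dot x x - 1)
                 + 4 * s * (1 - s * s * norm2 e) * dot x e)
                / ((1 + s * s * norm2 e) * (1 + s * s * norm2 e))).
  - unfold great_circle, norm2, dot, vadd, vscal, c1, c2, c3, mk3 in Hd |- *; cbn [fst snd] in Hd |- *.
    field. exact Hd.
  - rewrite Hx, Hxe. field. exact Hd.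
Qed.

Lemma great_circle_0 x e : great_circle x e 0 = x.
Proof.
  unfold great_circle, vadd, vscal, c1, c2, c3, mk3; cbn [fst snd].
  rewrite (v3_eta x) at 4. unfold mk3, c1, c2, c3. f_equal; [f_equal|]; field.
Qed.

Lemma great_circle_v3zero x s : great_circle x v3zero s = x.
Proof.
  unfold great_circle, norm2, dot, v3zero, vadd, vscal, c1, c2, c3, mk3; cbn [fst snd].
  rewrite (v3_eta x) at 4. unfold mk3, c1, c2, c3. f_equal; [f_equal|]; field.
Qed.

Lemma is_derive_great_circle_s x e i :
  is_derive (fun s => coord i (great_circle x e s)) 0 (2 * coord i e).
Proof.
  pose proof (great_circle_denominator_pos e 0).
  destruct i as [|[|]]; unfold great_circle, vadd, vscal, coord, c1, c2, c3, mk3; cbn [fst snd];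
    auto_derive; try lra; field; lra.
Qed.

Lemma is_derive_great_circle_coord (x e e1 e2 e3 : R -> R) s t0 dx :
  is_derive x t0 dx -> is_derive e t0 0 ->
  is_derive e1 t0 0 -> is_derive e2 t0 0 -> is_derive e3 t0 0 ->
  e t0 = 0 -> e1 t0 = 0 -> e2 t0 = 0 -> e3 t0 = 0 ->
  is_derive (fun t => / (1 + s * s * (e1 t * e1 t + e2 t * e2 t + e3 t * e3 t))
                      * ((1 - s * s * (e1 t * e1 t + e2 t * e2 t + e3 t * e3 t)) * x t
                         + 2 * s * e t)) t0 dx.
Proof.
  intros Hx He He1 He2 He3 E E1 E2 E3. auto_derive.
  - repeat split; try (eexists; eassumption). rewrite E1, E2, E3. lra.
  - assert (D : forall f l, is_derive f t0 l -> Derive (fun y : R => f y) t0 = l)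
      by (intros f l Hf; apply is_derive_unique, Hf).
    rewrite (D x _ Hx), (D e _ He), (D e1 _ He1), (D e2 _ He2), (D e3 _ He3), E, E1, E2, E3.
    field.
Qed.

Lemma is_derive_great_circle_t (X E : R -> v3) s t0 i dx :
  is_derive (fun t => coord i (X t)) t0 dx -> E t0 = v3zero ->
  (forall j, is_derive (fun t => coord j (E t)) t0 0) ->
  is_derive (fun t => coord i (great_circle (X t) (E t) s)) t0 dx.
Proof.
  intros HX HE0 HE.
  assert (Z : forall j, coord j (E t0) = 0) by (intros [|[|]]; rewrite HE0; reflexivity).
  eapply is_derive_ext;
    [|exact (is_derive_great_circle_coord (fun t => coord i (X t)) (fun t => coord i (E t))
               (fun t => coord 0 (E t)) (fun t => coord 1 (E t)) (fun t => coord 2 (E t))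
               s t0 dx HX (HE i) (HE 0%nat) (HE 1%nat) (HE 2%nat) (Z i) (Z 0%nat) (Z 1%nat) (Z 2%nat))].
  intros t. destruct i as [|[|]]; reflexivity.
Qed.

Lemma smooth_vec_great_circle (X E : R -> R -> v3) : smooth_vec X -> smooth_vec E ->
  smooth_vec (fun s t => great_circle (X s t) (E s t) s).
Proof.
  intros HX HE. pose proof (smooth2_dot E E HE HE) as HN.
  set (sN := fmul (fmul fvar_s fvar_s) (fun s t => norm2 (E s t))).
  assert (HsN : smooth2 sN) by (unfold sN; smooth2_tac).
  apply smooth_vec_vscal.
  - apply (smooth2_finv (fadd (fconst 1) sN)); [|smooth2_tac].
    intros s t. apply Rgt_not_eq, great_circle_denominator_pos.
  - apply smooth_vec_vadd; apply smooth_vec_vscal; try assumption.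
    + apply (smooth2_fadd (fconst 1) (fopp sN)); smooth2_tac.
    + apply (smooth2_fmul (fconst 2) fvar_s); smooth2_tac.
Qed.

Definition bump (T t : R) : R := t * t * ((T - t) * (T - t)).

Lemma bump_pos T t : 0 < t < T -> 0 < bump T t.
Proof. intros Ht. unfold bump. apply Rmult_lt_0_compat; apply Rmult_lt_0_compat; lra. Qed.

Lemma bump_nonneg T t : 0 <= bump T t.
Proof. unfold bump. apply Rmult_le_pos; apply Rle_0_sqr. Qed.

Lemma bump_endpoints T : bump T 0 = 0 /\ bump T T = 0 /\
  is_derive (bump T) 0 0 /\ is_derive (bump T) T 0.
Proof.
  unfold bump. split; [ring|]. split; [ring|].
  split; auto_derive; try exact I; ring.
Qed.

Lemma smooth2_bump T : smooth2 (fun _ t => bump T t).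
Proof.
  change (smooth2 (fmul (fmul fvar_t fvar_t)
    (fmul (fadd (fconst T) (fopp fvar_t)) (fadd (fconst T) (fopp fvar_t))))).
  smooth2_tac.
Qed.

Definition test_direction T V c (t : R) : v3 := vscal (bump T t) (proj (c t) (EL_expr V c t)).

Definition test_variation T V c (s t : R) : v3 := great_circle (c t) (test_direction T V c t) s.

Section TestVariation.

Variables (T : R) (V : v3 -> R) (c : R -> v3).
Hypotheses (HT : 0 < T) (HV : smooth3 V) (Hc : smooth_curve c)
  (HS : forall t, 0 <= t <= T -> onS2 (c t)).

Lemma smooth_vec_test_direction : smooth_vec (fun _ t => test_direction T V c t).
Proof.
  apply (smooth_vec_vscal (fun _ t => bump T t)); [apply smooth2_bump|].
  apply smooth_vec_tangent_EL; assumption.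
Qed.

Lemma is_derive_test_direction_endpoint t0 :
  bump T t0 = 0 -> is_derive (bump T) t0 0 ->
  test_direction T V c t0 = v3zero /\
  forall j, is_derive (fun t => coord j (test_direction T V c t)) t0 0.
Proof.
  intros Hb Hdb. split; [unfold test_direction; rewrite Hb; apply vscal_0|].
  intros j. pose proof (smooth_vec_tangent_EL V c HV Hc j) as Hy.
  destruct (smooth2_ex_derive_t _ 0 t0 Hy) as [dy Hdy].
  apply (is_derive_ext (fun t => bump T t * component (fun _ t => proj (c t) (EL_expr V c t)) j 0 t)).
  { intros t. destruct j as [|[|]]; reflexivity. }
  replace 0 with (0 * component (fun _ t => proj (c t) (EL_expr V c t)) j 0 t0 + bump T t0 * dy)
    by (rewrite Hb; ring).
  apply (is_derive_mult (bump T)); [exact Hdb | exact Hdy | intros; apply Rmult_comm].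
Qed.

Lemma test_variation_admissible : admissible_variation T c (test_variation T V c).
Proof.
  pose proof (smooth_vec_great_circle _ _ (smooth_vec_curve c Hc) smooth_vec_test_direction) as Hsm.
  assert (Hend : forall t0, bump T t0 = 0 -> is_derive (bump T) t0 0 ->
            forall s, test_variation T V c s t0 = c t0 /\ dn 1 (test_variation T V c s) t0 = dn 1 c t0).
  { intros t0 Hb Hdb s. destruct (is_derive_test_direction_endpoint t0 Hb Hdb) as [E0 E'].
    unfold test_variation. rewrite E0, great_circle_v3zero. split; [reflexivity|].
    destruct Hc as [H1 [H2 H3]]. unfold dn. f_equal; apply is_derive_unique;
      [apply (is_derive_great_circle_t c _ s t0 0) | apply (is_derive_great_circle_t c _ s t0 1)
      | apply (is_derive_great_circle_t c _ s t0 2)]; auto; apply Derive_correct;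
      [apply (H1 O) | apply (H2 O) | apply (H3 O)]. }
  destruct (bump_endpoints T) as [B0 [BT [DB0 DBT]]].
  split; [exact (Hsm 0%nat)|]. split; [exact (Hsm 1%nat)|]. split; [exact (Hsm 2%nat)|].
  split; [intros t _; apply great_circle_0|].
  split.
  - intros s t Ht. apply great_circle_onS2; [apply HS, Ht|].
    unfold test_direction. transitivity (bump T t * dot (c t) (proj (c t) (EL_expr V c t))).
    + unfold dot, vscal, c1, c2, c3, mk3; cbn [fst snd]. ring.
    + rewrite dot_proj_onS2 by (apply HS, Ht). ring.
  - intros s. destruct (Hend 0 B0 DB0 s), (Hend T BT DBT s). tauto.
Qed.

Lemma variation_field_test_variation t :
  variation_field (test_variation T V c) t = vscal 2 (test_direction T V c t).
Proof.
  unfold variation_field, vec_at, vscal. f_equal; apply is_derive_unique;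
    [apply (is_derive_great_circle_s _ _ 0) | apply (is_derive_great_circle_s _ _ 1)
    | apply (is_derive_great_circle_s _ _ 2)].
Qed.

Lemma test_variation_first_variation :
  is_derive (fun s => action T V (test_variation T V c s)) 0
    (RInt (fun t => 2 * bump T t * norm2 (proj (c t) (EL_expr V c t))) 0 T).
Proof.
  replace (RInt _ 0 T) with (RInt (fun t => dot (proj (c t) (EL_expr V c t))
                                             (variation_field (test_variation T V c) t)) 0 T).
  - exact (first_variation T V c _ HT HV test_variation_admissible).
  - apply RInt_ext. intros t _. rewrite variation_field_test_variation.
    exact (dot_vscal_vscal_self _ 2 (bump T t)).
Qed.

End TestVariation.

Lemma bump_weighted_norm2_zero T (y : R -> v3) : 0 < T -> smooth_vec (fun _ t => y t) ->
  RInt (fun t => 2 * bump T t * norm2 (y t)) 0 T = 0 -> forall t, 0 <= t <= T -> y t = v3zero.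
Proof.
  intros HT Hy HI.
  assert (HF : smooth2 (fun _ t => 2 * bump T t * norm2 (y t))).
  { apply (smooth2_fmul (fmul (fconst 2) (fun _ t => bump T t))).
    - apply smooth2_fmul; [apply smooth2_fconst | apply smooth2_bump].
    - apply smooth2_dot; exact Hy. }
  assert (Z : forall t, 0 < t < T -> y t = v3zero).
  { intros t Ht. apply norm2_eq_0.
    pose proof (RInt_nonneg_zero _ 0 T HT (fun t _ => smooth2_continuous_t _ 0 t HF)
      (fun t _ => Rmult_le_pos _ _ (Rmult_le_pos _ _ (Rlt_le _ _ Rlt_0_2) (bump_nonneg T t))
                    (norm2_nonneg _)) HI t Ht) as Ft.
    pose proof (bump_pos T t Ht). simpl in Ft. nra. }
  assert (Zc : forall j t, 0 <= t <= T -> coord j (y t) = 0).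
  { intros j t Ht.
    apply (continuous_vanishing_interior (fun t => coord j (y t)) 0 T t HT Ht).
    - exact (smooth2_continuous_t _ 0 t (Hy j)).
    - intros x Hx. rewrite (Z x Hx). destruct j as [|[|]]; reflexivity. }
  intros t Ht. apply v3_eq_zero; apply Zc, Ht.
Qed.

Theorem mainTheorem2 (T : R) (HT : 0 < T) (V : v3 -> R) (HV : smooth3 V)
  (c : R -> v3) (Hc : smooth_curve c)
  (HS : forall t, 0 <= t <= T -> onS2 (c t)) :
  qrc_obstacle T V c <->
  (forall t, 0 <= t <= T -> proj (c t) (EL_expr V c t) = v3zero).
Proof.
  split.
  - intros Hcrit. apply (bump_weighted_norm2_zero T _ HT (smooth_vec_tangent_EL V c HV Hc)).
    rewrite <- (is_derive_unique _ _ _ (test_variation_first_variation T V c HT HV Hc HS)).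
    apply is_derive_unique, Hcrit, test_variation_admissible; assumption.
  - intros HEL N HN.
    assert (E : RInt (fun t => dot (proj (c t) (EL_expr V c t)) (variation_field N t)) 0 T = 0).
    { rewrite (RInt_ext _ (fun _ => 0)), RInt_const; [apply Rmult_0_r|].
      intros t Ht. rewrite Rmin_left, Rmax_right in Ht by lra.
      rewrite HEL by lra. apply dot_v3zero_l. }
    pose proof (first_variation T V c N HT HV HN) as H. rewrite E in H. exact H.
Qed.
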